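(* Fix a dataset $\mathbb D_N$ and a point $x\in\mathcal X$. Suppose the GP-CBF-SOCP is feasible at $x$, i.e. there exists $u\in\mathbb R^m$ with $$L_{\tilde f}B(x)+L_{\tilde g}B(x)u+\mu_B(x,u|\mathbb D_N)-\beta\sigma_B(x,u|\mathbb D_N)+\gamma(B(x))\ge0.$$ Then $$\begin{bmatrix}\widehat{L_fB}(x|\mathbb D_N)+\gamma(B(x))\\ \widehat{L_gB}(x|\mathbb D_N)^T\end{bmatrix}^T\Sigma_B(x|\mathbb D_N)^{-1}\begin{bmatrix}\widehat{L_fB}(x|\mathbb D_N)+\gamma(B(x))\\ \widehat{L_gB}(x|\mathbb D_N)^T\end{bmatrix}\ge\beta^2.$$
   Context: Consider the control-affine system $\dot x=f(x)+g(x)u$ with state $x\in\mathcal X\subset\mathbb R^n$ and input $u\in\mathbb R^m$. Here $f$ and $g$ are locally Lipschitz and unknown. A nominal model $\tilde f,\tilde g$ of the same type is available. Let $B:\mathcal X\to\mathbb R$ be continuously differentiable and let $\gamma$ be an extended class-$\mathcal K_\infty$ function. Lie derivatives: $L_{\tilde f}B(x)=\nabla B(x)\tilde f(x)\in\mathbb R$ and $L_{\tilde g}B(x)=\nabla B(x)\tilde g(x)\in\mathbb R^{1\times m}$; $L_fB$ and $L_gB$ are defined similarly. Set $\Delta_B(x,u)=(L_fB-L_{\tilde f}B)(x)+(L_gB-L_{\tilde g}B)(x)u$. A dataset $\mathbb D_N=\{((x_j,u_j),z_j)\}_{j=1}^N$ consists of measurements $z_j=\Delta_B(x_j,u_j)+\epsilon_j$.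 GP model: - Kernels $k_1,\dots,k_{m+1}$ on $\mathcal X$ are given, together with the affine dot product kernel $k_c((x,y),(x',y'))=y^T\mathrm{diag}(k_i(x,x'))_{i=1}^{m+1}y'$. - Let $y_j=[1,u_j^T]^T$, $\mathbf z=(z_j)_j$, let $\sigma_n>0$, and let $K_c$ be the $N\times N$ Gram matrix of $k_c$ on the data. - Let $K_{**}(x)=\mathrm{diag}(k_i(x,x))$, and let $K_{*Y}(x)\in\mathbb R^{(m+1)\times N}$ have entries $k_i(x,x_j)(y_j)_i$. - Define $m_B(x|\mathbb D_N)=K_{*Y}(K_c+\sigma_n^2I)^{-1}\mathbf z$ and $\Sigma_B(x|\mathbb D_N)=K_{**}-K_{*Y}(K_c+\sigma_n^2I)^{-1}K_{*Y}^T$. The matrix $\Sigma_B(x|\mathbb D_N)$ is positive definite. - The GP posterior mean and standard deviation are $\mu_B(x,u|\mathbb D_N)=m_B^T[1;u]$ and $\sigma_B(x,u|\mathbb D_N)=\sqrt{[1,u^T]\Sigma_B[1;u]}$. $\beta>0$ is a constant. Define $\widehat{L_fB}(x|\mathbb D_N)=L_{\tilde f}B(x)+(m_B)_1$ and $\widehat{L_gB}(x|\mathbb D_N)=L_{\tilde g}B(x)+((m_B)_2,\dots,(m_B)_{m+1})\in\mathbb R^{1\times m}$. The GP-CBF-SOCP at $x$ minimizes $\|u-u_{\text{ref}}(x)\|_2^2$ subject to the displayed constraint, where $u_{\text{ref}}$ is a reference controller. *)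

From HB Require Import structures.
From mathcomp Require Import all_boot all_order all_algebra.
From mathcomp Require Import all_classical all_reals all_analysis.
Set Implicit Arguments. Unset Strict Implicit. Unset Printing Implicit Defensive.
Import Order.TTheory GRing.Theory Num.Theory.
Import numFieldNormedType.Exports.
Local Open Scope classical_set_scope.
Local Open Scope ring_scope.

Section GP.
Variables (R : realType) (n m N : nat).

Definition LieD (B : 'rV[R]_n -> R) (h : 'rV[R]_n -> 'rV[R]_n) (x : 'rV[R]_n) : R :=
  'd B x (h x).

(* L_g B (x) in R^{1 x m}; gt x j is the j-th column of g(x). *)
Definition LieDg (B : 'rV[R]_n -> R) (gt : 'rV[R]_n -> 'I_m -> 'rV[R]_n)
  (x : 'rV[R]_n) : 'rV[R]_m := \row_j 'd B x (gt x j).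

Definition is_kernel (k : 'rV[R]_n -> 'rV[R]_n -> R) : Prop :=
  (forall a b, k a b = k b a) /\
  (forall p (pts : 'I_p -> 'rV[R]_n) (c : 'cV[R]_p),
      0 <= ((c^T *m \matrix_(i, j) k (pts i) (pts j)) *m c) 0 0).

Definition ext_classKinf (gam : R -> R) : Prop :=
  continuous gam /\ (forall a b, a < b -> gam a < gam b) /\ gam 0 = 0 /\
  (gam x @[x --> +oo] --> +oo) /\ (gam x @[x --> -oo] --> -oo).

Variables (k : 'I_(1 + m) -> 'rV[R]_n -> 'rV[R]_n -> R)
  (xs : 'I_N -> 'rV[R]_n) (us : 'I_N -> 'cV[R]_m) (z : 'cV[R]_N) (sn : R).

Definition yvec (u : 'cV[R]_m) : 'cV[R]_(1 + m) := col_mx 1 u.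

Definition Kc : 'M[R]_N :=
  \matrix_(j, j') \sum_(i < 1 + m) yvec (us j) i 0 * k i (xs j) (xs j') * yvec (us j') i 0.

Definition Kss (x : 'rV[R]_n) : 'M[R]_(1 + m) := \matrix_(i, i') ((i == i')%:R * k i x x).

Definition KsY (x : 'rV[R]_n) : 'M[R]_(1 + m, N) :=
  \matrix_(i, j) (k i x (xs j) * yvec (us j) i 0).

Definition mB (x : 'rV[R]_n) : 'cV[R]_(1 + m) :=
  KsY x *m invmx (Kc + sn ^+ 2 *: 1%:M) *m z.

Definition SigmaB (x : 'rV[R]_n) : 'M[R]_(1 + m) :=
  Kss x - KsY x *m invmx (Kc + sn ^+ 2 *: 1%:M) *m (KsY x)^T.

Definition muB (x : 'rV[R]_n) (u : 'cV[R]_m) : R := ((mB x)^T *m yvec u) 0 0.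

Definition sigmaB (x : 'rV[R]_n) (u : 'cV[R]_m) : R :=
  Num.sqrt (((yvec u)^T *m SigmaB x *m yvec u) 0 0).

End GP.

From HB Require Import structures.
From mathcomp Require Import all_boot all_order all_algebra.
From mathcomp Require Import all_classical all_reals all_analysis.
From mathcomp Require Import ring lra.
Set Implicit Arguments. Unset Strict Implicit. Unset Printing Implicit Defensive.
Import Order.TTheory GRing.Theory Num.Theory.
Import numFieldNormedType.Exports.
Local Open Scope ring_scope.

(* Feasibility at u says beta * ||y||_S <= w^T y for y = [1; u], where ||.||_S is the
   norm of the inner product <a, b>_S = a^T Sigma b.  Since w^T y = <Sigma^-1 w, y>_S,
   Cauchy-Schwarz gives beta^2 ||y||_S^2 <= (w^T y)^2 <= ||Sigma^-1 w||_S^2 ||y||_S^2,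
   and ||Sigma^-1 w||_S^2 = w^T Sigma^-1 w; it remains to divide by ||y||_S^2 > 0. *)

Section PosdefForm.
Variables (R : rcfType) (p : nat) (S : 'M[R]_p).
Hypothesis S_sym : S^T = S.
Hypothesis S_posdef : forall v : 'cV[R]_p, v != 0 -> 0 < ((v^T *m S) *m v) 0 0.

Definition mxform (a b : 'cV[R]_p) : R := ((a^T *m S) *m b) 0 0.

Lemma mxform_ge0 a : 0 <= mxform a a.
Proof.
have [->|a_neq0] := eqVneq a 0; last exact/ltW/S_posdef.
by rewrite /mxform mulmx0 mxE.
Qed.

Lemma mxformC a b : mxform a b = mxform b a.
Proof.
have tr00 (M : 'M[R]_1) : M^T 0 0 = M 0 0 by rewrite mxE.
by rewrite /mxform -[LHS]tr00 !trmx_mul trmxK S_sym mulmxA.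
Qed.

Lemma mxform_subZr a b c t : mxform a (b - t *: c) = mxform a b - t * mxform a c.
Proof. by rewrite /mxform mulmxBr -scalemxAr !mxE. Qed.

Lemma mxform_subZ a b t :
  mxform (a - t *: b) (a - t *: b) =
  mxform a a - 2 * t * mxform a b + t ^+ 2 * mxform b b.
Proof. by rewrite !mxform_subZr !(mxformC (a - _)) !mxform_subZr (mxformC b a); ring. Qed.

Lemma mxform_Cauchy_Schwarz a b : mxform a b ^+ 2 <= mxform a a * mxform b b.
Proof.
have [->|b_neq0] := eqVneq b 0.
  by rewrite /mxform !mulmx0 !mxE expr0n mulr0.
have bb_gt0 : 0 < mxform b b by exact: S_posdef.
set t := mxform a b / mxform b b.
have := mxform_ge0 (a - t *: b); rewrite mxform_subZ -(ler_pM2r bb_gt0) mul0r.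
suff -> : (mxform a a - 2 * t * mxform a b + t ^+ 2 * mxform b b) * mxform b b =
  mxform a a * mxform b b - mxform a b ^+ 2 by rewrite subr_ge0.
by rewrite /t; field; rewrite gt_eqF.
Qed.

Lemma posdef_unitmx : S \in unitmx.
Proof.
rewrite -row_free_unit; apply: inj_row_free => v vS0; apply/eqP/negPn/negP => v_neq0.
have := @S_posdef v^T; rewrite trmx_eq0 trmxK vS0 mul0mx mxE ltxx.
by move/(_ v_neq0).
Qed.

Lemma mxform_invmxl w b : mxform (invmx S *m w) b = (w^T *m b) 0 0.
Proof.
rewrite /mxform trmx_mul trmx_inv S_sym -(mulmxA _ _ S).
by rewrite mulVmx ?posdef_unitmx // mulmx1.
Qed.

Lemma mxform_invmx w :
  mxform (invmx S *m w) (invmx S *m w) = ((w^T *m invmx S) *m w) 0 0.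
Proof. by rewrite mxform_invmxl !mulmxA. Qed.

Lemma posdef_dual_norm_ge (beta : R) (w y : 'cV[R]_p) :
  0 <= beta -> y != 0 -> beta * Num.sqrt (mxform y y) <= (w^T *m y) 0 0 ->
  beta ^+ 2 <= ((w^T *m invmx S) *m w) 0 0.
Proof.
move=> beta_ge0 y_neq0 feas.
have yy_gt0 : 0 < mxform y y by exact: S_posdef.
have lhs_ge0 : 0 <= beta * Num.sqrt (mxform y y) by rewrite mulr_ge0 ?sqrtr_ge0.
have : beta ^+ 2 * mxform y y <= ((w^T *m y) 0 0) ^+ 2.
  rewrite -[mxform y y](sqr_sqrtr (ltW yy_gt0)) -exprMn ler_pXn2r ?nnegrE //.
  exact: le_trans feas.
rewrite -mxform_invmxl -mxform_invmx => /le_trans/(_ (mxform_Cauchy_Schwarz _ _)).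
by rewrite ler_pM2r.
Qed.

End PosdefForm.

Section GPModel.
Variables (R : realType) (n m N : nat).
Variables (k : 'I_(1 + m) -> 'rV[R]_n -> 'rV[R]_n -> R)
  (xs : 'I_N -> 'rV[R]_n) (us : 'I_N -> 'cV[R]_m) (sn : R).
Hypothesis k_sym : forall i a b, k i a b = k i b a.

Lemma Kc_sym : (Kc k xs us)^T = Kc k xs us.
Proof.
apply/matrixP => j j'; rewrite !mxE; apply: eq_bigr => i _.
by rewrite k_sym; ring.
Qed.

Lemma Kss_sym x : (Kss k x)^T = Kss k x.
Proof.
by apply/matrixP => i i'; rewrite !mxE eq_sym; case: eqP => [->|_]; rewrite ?mul0r.
Qed.

Lemma SigmaB_sym x : (SigmaB k xs us sn x)^T = SigmaB k xs us sn x.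
Proof.
rewrite /SigmaB linearB /= Kss_sym !trmx_mul trmxK trmx_inv linearD /= Kc_sym.
by rewrite linearZ /= trmx1 mulmxA.
Qed.

Lemma yvec_neq0 (u : 'cV[R]_m) : yvec u != 0.
Proof.
apply: contraNneq (oner_neq0 R) => /(congr1 (fun v => usubmx v 0 0)).
by rewrite col_mxKu !mxE eqxx => /eqP.
Qed.

End GPModel.

Theorem lemma3 (R : realType) (n m N : nat)
  (B : 'rV[R]_n -> R) (gam : R -> R)
  (ft : 'rV[R]_n -> 'rV[R]_n) (gt : 'rV[R]_n -> 'I_m -> 'rV[R]_n)
  (k : 'I_(1 + m) -> 'rV[R]_n -> 'rV[R]_n -> R)
  (xs : 'I_N -> 'rV[R]_n) (us : 'I_N -> 'cV[R]_m) (z : 'cV[R]_N)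
  (sn beta : R) (x : 'rV[R]_n) :
  (forall y, differentiable B y) ->
  ext_classKinf gam ->
  (forall i, is_kernel (k i)) ->
  0 < sn -> 0 < beta ->
  (forall v : 'cV[R]_(1 + m), v != 0 ->
     0 < ((v^T *m SigmaB k xs us sn x) *m v) 0 0) ->
  (exists u : 'cV[R]_m,
     0 <= LieD B ft x + (LieDg B gt x *m u) 0 0 + muB k xs us z sn x u
          - beta * sigmaB k xs us sn x u + gam (B x)) ->
  let Lf_hat := LieD B ft x + usubmx (mB k xs us z sn x) 0 0 in
  let Lg_hat := LieDg B gt x + (dsubmx (mB k xs us z sn x))^T in
  let w : 'cV[R]_(1 + m) := col_mx (Lf_hat + gam (B x))%:M Lg_hat^T in
  beta ^+ 2 <= ((w^T *m invmx (SigmaB k xs us sn x)) *m w) 0 0.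
Proof.
move=> _ _ kern _ beta_gt0 S_posdef [u feas]; cbv zeta; set w := col_mx _ _.
have k_sym i : forall a b, k i a b = k i b a by case: (kern i).
apply: (posdef_dual_norm_ge (SigmaB_sym xs us sn k_sym x) S_posdef (ltW beta_gt0)
  (yvec_neq0 u)).
have -> : (w^T *m yvec u) 0 0 = LieD B ft x + (LieDg B gt x *m u) 0 0
    + muB k xs us z sn x u + gam (B x).
  rewrite /w /yvec /muB tr_col_mx trmxK mul_row_col.
  rewrite -[mB k xs us z sn x]vsubmxK tr_col_mx mul_row_col col_mxKu col_mxKd.
  by rewrite !mulmx1 mulmxDl !mxE eqxx mulr1n; ring.
by rewrite /sigmaB in feas; rewrite /mxform; lra.
Qed.
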